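(* Let $n\ge 5$ and let $T(n)$ be the triangular graph. The complement $\overline{T(n)}$ of $T(n)$ is a Neumaier graph if and only if $n$ is even. In this case, if $\overline{T(n)}$ is a (strongly regular) Neumaier graph with parameters $(\binom{n}{2},k,\lambda,\mu;a,c)$, then $n=2a+4$ and $c=a+2$.
   Context: The triangular graph $T(n)$ ($n\ge5$) is the line graph of the complete graph $K_n$: its vertices are the 2-subsets of $\{1,\dots,n\}$, two being adjacent iff they intersect; $T(n)$ and its complement are strongly regular. A graph is edge-regular with parameters $(n,k,\lambda)$ if it has $n$ vertices, is $k$-regular, and any two adjacent vertices have exactly $\lambda$ common neighbours. A clique $C$ is a regular clique with nexus $a$ if every vertex not in $C$ has exactly $a$ neighbours in $C$. A Neumaier graph is a non-complete edge-regular graph containing a regular clique; it has parameters $(n,k,\lambda;a,c)$ if it is edge-regular with parameters $(n,k,\lambda)$ and contains a regular clique of size $c$ with nexus $a$. A strongly regular Neumaier graph with parameters $(n,k,\lambda,\mu;a,c)$ is a strongly regular graph with parameters $(n,k,\lambda,\mu)$ (non-complete, connected, $k$-regular, adjacent vertices having $\lambda$ and non-adjacent vertices having $\mu$ common neighbours) which is a Neumaier graph with parameters $(n,k,\lambda;a,c)$. *)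

From mathcomp Require Import all_boot.
Set Implicit Arguments. Unset Strict Implicit. Unset Printing Implicit Defensive.

Section Graphs.
Variable T : finType.
Implicit Types (e : rel T) (C : {set T}).

Definition compl_graph e : rel T := fun x y => (x != y) && ~~ e x y.

Definition complete e := forall x y : T, x != y -> e x y.

Definition regular e (k : nat) := forall x : T, #|[set y | e x y]| = k.

Definition edge_regular e (n k l : nat) :=
  [/\ #|T| = n, regular e k &
      forall x y, e x y -> #|[set z | e x z && e y z]| = l].

Definition is_clique e C := forall x y, x \in C -> y \in C -> x != y -> e x y.

Definition regular_clique e C (a : nat) :=
  [/\ is_clique e C, C != set0 &
      forall x, x \notin C -> #|[set y in C | e x y]| = a].

Definition Neumaier_with e (n k l a c : nat) :=
  [/\ ~ complete e, edge_regular e n k l &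
      exists C : {set T}, regular_clique e C a /\ #|C| = c].

Definition Neumaier e := exists n k l a c, Neumaier_with e n k l a c.

Definition strongly_regular e (n k l m : nat) :=
  #|T| = n /\ ~ complete e /\ (forall x y, connect e x y) /\ regular e k /\
  (forall x y, e x y -> #|[set z | e x z && e y z]| = l) /\
  (forall x y, x != y -> ~~ e x y -> #|[set z | e x z && e y z]| = m).

Definition SR_Neumaier_with e (n k l m a c : nat) :=
  strongly_regular e n k l m /\ Neumaier_with e n k l a c.

End Graphs.

Definition pair_vertex (n : nat) := {A : {set 'I_n} | #|A| == 2}.

Definition tri_adj (n : nat) : rel (pair_vertex n) :=
  fun A B => (A != B) && (val A :&: val B != set0).
Arguments tri_adj n : clear implicits.

From mathcomp Require Import all_boot zify.
Set Implicit Arguments. Unset Strict Implicit. Unset Printing Implicit Defensive.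

(* In the complement of T(n) two pairs are adjacent iff they are disjoint, so a
   clique is a matching P of {0, ..., n-1}, and a pair B outside P is adjacent
   to exactly the members of P that it avoids. Distinct pairs meet in at most one
   point, so B avoids #|P| - #|B :&: cover P| members. If P is a regular clique,
   #|B :&: cover P| is therefore the same for every pair B outside P; as n >= 4,
   a point outside cover P would yield two such pairs meeting cover P in a
   different number of points. So P is a perfect matching: n = 2 #|P| and the
   nexus is #|P| - 2. Conversely, for even n every perfect matching is a regular
   clique. *)

Section SetFacts.
Variable T : finType.
Implicit Types (A B S : {set T}) (x y : T).

Lemma card2_setI_le1 A B : #|A| = 2 -> #|B| = 2 -> A != B -> #|A :&: B| <= 1.
Proof.
move=> cA cB; apply: contraNT; rewrite -ltnNge => cAB.
have /eqP AB_A : A :&: B == A by rewrite eqEcard subsetIl cA.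
have /eqP AB_B : A :&: B == B by rewrite eqEcard subsetIr cB.
by rewrite -{1}AB_A AB_B.
Qed.

Lemma card_setI_le1 A B : #|A :&: B| <= 1 -> #|A :&: B| = ~~ [disjoint A & B].
Proof. by rewrite -setI_eq0 -cards_eq0; case: #|_| => [|[]]. Qed.

Lemma card_set2I x y S : x != y -> #|[set x; y] :&: S| = (x \in S) + (y \in S).
Proof.
move=> xy; rewrite -sum1_card (eq_bigl (fun z => (z \in [set x; y]) && (z \in S))).
  by rewrite big_mkcondr big_setU1 ?big_set1 ?inE.
by move=> z; rewrite inE.
Qed.

Lemma exists_notin S : #|S| < #|T| -> exists y, y \notin S.
Proof.
move=> ltST; have /card_gt0P [y] : 0 < #|~: S| by rewrite cardsCs setCK; lia.
by rewrite inE; exists y.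
Qed.

End SetFacts.

Section Matching.
Variables (T : finType) (P : {set {set T}}).
Hypotheses (P_triv : trivIset P) (P_pairs : {in P, forall A : {set T}, #|A| = 2}).

Lemma card_cover_matching : #|cover P| = 2 * #|P|.
Proof. by rewrite -(eqnP P_triv) (eq_bigr _ P_pairs) sum_nat_const mulnC. Qed.

Lemma matching_meet_eq A1 A2 x : A1 \in P -> A2 \in P -> x \in A1 -> x \in A2 -> A1 = A2.
Proof.
move=> P1 P2 x1 x2; have /trivIsetP tiP := P_triv.
by apply/eqP/negPn/negP => /(tiP _ _ P1 P2)/disjointFr/(_ x1); rewrite x2.
Qed.

Lemma set2_notin_matching A x y : A \in P -> x \in A -> y \notin A -> [set x; y] \notin P.
Proof.
move=> PA Ax Ay; apply: contra Ay => Pxy.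
by rewrite (matching_meet_eq PA Pxy Ax (set21 x y)) set22.
Qed.

Lemma card_setI_cover (B : {set T}) : #|B| = 2 -> B \notin P ->
  #|B :&: cover P| = #|[set A in P | ~~ [disjoint A & B]]|.
Proof.
move=> cB BP.
have -> : #|B :&: cover P| = \sum_(x in cover P | x \in B) 1.
  by rewrite sum1dep_card; apply: eq_card => x; rewrite !inE andbC.
rewrite big_trivIset_cond // -sum1dep_card big_mkcondr.
apply: eq_bigr => A PA; rewrite sum1dep_card -[RHS]/(nat_of_bool _) -card_setI_le1.
  by apply: eq_card => x; rewrite !inE.
by apply: card2_setI_le1 (P_pairs PA) cB _; apply: contraNneq BP => <-.
Qed.

Lemma card_disjoint_matching (B : {set T}) : #|B| = 2 -> B \notin P ->
  #|[set A in P | [disjoint A & B]]| + #|B :&: cover P| = #|P|.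
Proof.
move=> cB BP; rewrite card_setI_cover // -(cardsID [set A : {set T} | [disjoint A & B]] P).
by congr (_ + _); apply: eq_card => A; rewrite !inE andbC.
Qed.

Lemma nexus_perfect_matching (B : {set T}) : cover P = setT -> #|B| = 2 -> B \notin P ->
  #|[set A in P | [disjoint A & B]]| = #|P| - 2.
Proof.
by move=> covP cB BP; have := card_disjoint_matching cB BP; rewrite covP setIT cB; lia.
Qed.

Section RegularMatching.
Variable a : nat.
Hypothesis P_nexus : forall B : {set T}, #|B| = 2 -> B \notin P ->
  #|[set A in P | [disjoint A & B]]| = a.
Hypotheses (P_neq0 : P != set0) (T_ge4 : 4 <= #|T|).

Lemma nexus_set2_cover x y : x != y -> [set x; y] \notin P ->
  a + (x \in cover P) + (y \in cover P) = #|P|.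
Proof.
move=> xy xyP; have cxy : #|[set x; y]| = 2 by rewrite cards2 xy.
by rewrite -addnA -card_set2I // -(P_nexus cxy xyP) card_disjoint_matching.
Qed.

Lemma cover_regular_matching : cover P = setT.
Proof.
apply/setP => x; rewrite inE; apply/negPn/negP => x_out.
have [A0 PA0] := set0Pn _ P_neq0.
have /card_gt0P [p A0p] : 0 < #|A0| by rewrite P_pairs.
have p_in : p \in cover P by apply/bigcupP; exists A0.
have xp : x != p by apply: contraNneq x_out => ->.
have x_notin (B : {set T}) : x \in B -> B \notin P.
  by move=> Bx; apply: contra x_out => PB; apply/bigcupP; exists B.
have [y] : exists y, y \notin x |: A0.
  by apply: exists_notin; rewrite cardsU1 P_pairs //; case: (x \notin A0); lia.
rewrite !inE negb_or => /andP [yx yA0].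
have := nexus_set2_cover xp (x_notin _ (set21 x p)); rewrite (negbTE x_out) p_in.
case: (boolP (y \in cover P)) => [y_in | y_out].
  have py : p != y by apply: contraNneq yA0 => <-.
  by have := nexus_set2_cover py (set2_notin_matching PA0 A0p yA0); rewrite p_in y_in; lia.
have xy : x != y by rewrite eq_sym.
have := nexus_set2_cover xy (x_notin _ (set21 x y)).
by rewrite (negbTE x_out) (negbTE y_out); lia.
Qed.

Lemma regular_matching_nexus : a + 2 = #|P|.
Proof.
have [A0 PA0] := set0Pn _ P_neq0.
have /card_gt0P [p A0p] : 0 < #|A0| by rewrite P_pairs.
have [y yA0] : exists y, y \notin A0 by apply: exists_notin; rewrite P_pairs //; lia.
have py : p != y by apply: contraNneq yA0 => <-.
have := nexus_set2_cover py (set2_notin_matching PA0 A0p yA0).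
by rewrite cover_regular_matching !inE -addnA.
Qed.

Lemma card_regular_matching : #|T| = 2 * #|P|.
Proof. by rewrite -card_cover_matching cover_regular_matching cardsT. Qed.

End RegularMatching.
End Matching.

Lemma even_perfect_matching n : ~~ odd n ->
  exists P : {set {set 'I_n}},
    partition P [set: 'I_n] /\ {in P, forall A : {set 'I_n}, #|A| = 2}.
Proof.
rewrite -dvdn2 => n_even; exists (preim_partition (fun x : 'I_n => x %/ 2) setT).
split=> [|_ /imsetP [x _ ->]]; first exact: preim_partitionP.
have [lt1 lt2] : x %/ 2 * 2 < n /\ x %/ 2 * 2 + 1 < n by have := ltn_ord x; lia.
have -> : [set y in setT | x %/ 2 == (y : 'I_n) %/ 2] = [set Ordinal lt1; Ordinal lt2].
  apply/setP => y; rewrite !inE -!val_eqE /=.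
  apply/eqP/orP => [x_y | [] /eqP ->]; [|lia|lia].
  by case: (leqP y (x %/ 2 * 2)) => ?; [left | right]; apply/eqP; lia.
by rewrite cards2 -val_eqE /= neq_ltn addn1 ltnSn.
Qed.

Section ComplementTriangular.
Variable n : nat.
Local Notation G := (compl_graph (tri_adj n)).
Implicit Types (v w : pair_vertex n) (C : {set pair_vertex n}) (S : {set 'I_n}).

Lemma card_pair_vertex v : #|val v| = 2.
Proof. by case: v => A /= /eqP. Qed.

Lemma exists_pair_vertex S : #|S| = 2 -> exists v : pair_vertex n, val v = S.
Proof. by move/eqP => cS; exists (exist _ S cS). Qed.

Lemma compl_tri_adjE v w : G v w = [disjoint val v & val w].
Proof.
rewrite /compl_graph /tri_adj -setI_eq0.
case: (eqVneq v w) => [->|] /=; last by rewrite negbK.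
by rewrite setIid -cards_eq0 card_pair_vertex.
Qed.

Lemma card_pair_vertex_sub S : #|[set v : pair_vertex n | val v \subset S]| = 'C(#|S|, 2).
Proof.
rewrite -cards_draws -(card_imset _ val_inj); apply: eq_card => A; rewrite inE.
apply/imsetP/andP => [[v] | [AS /eqP cA]].
  by rewrite inE => vS ->; rewrite vS card_pair_vertex.
by have [v vA] := exists_pair_vertex cA; exists v; rewrite ?inE vA.
Qed.

Lemma card_pair_vertex_all : #|{: pair_vertex n}| = 'C(n, 2).
Proof.
have := card_pair_vertex_sub setT; rewrite cardsT card_ord => <-.
by apply: eq_card => v; rewrite !inE subsetT.
Qed.

Lemma compl_tri_edge_regular : edge_regular G 'C(n, 2) 'C(n - 2, 2) 'C(n - 4, 2).
Proof.
split=> [|v|v w]; first exact: card_pair_vertex_all.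
  have -> : [set w | G v w] = [set w : pair_vertex n | val w \subset ~: val v].
    by apply/setP => w; rewrite !inE compl_tri_adjE disjoint_sym disjoints_subset.
  by rewrite card_pair_vertex_sub cardsCs setCK card_ord card_pair_vertex.
rewrite compl_tri_adjE => vw.
have -> : [set z | G v z && G w z]
    = [set z : pair_vertex n | val z \subset ~: (val v :|: val w)].
  apply/setP => z; rewrite !inE !compl_tri_adjE setCU subsetI.
  by rewrite ![[disjoint _ & val z]]disjoint_sym !disjoints_subset.
rewrite card_pair_vertex_sub cardsCs setCK card_ord cardsU (disjoint_setI0 vw).
by rewrite cards0 !card_pair_vertex.
Qed.

Lemma compl_tri_not_complete : 3 <= n -> ~ complete G.
Proof.
move=> n_ge3 G_complete.
have [lt0n lt1n lt2n] : [/\ 0 < n, 1 < n & 2 < n] by split; lia.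
pose x := Ordinal lt0n; pose y := Ordinal lt1n; pose z := Ordinal lt2n.
have [v vE] : exists v, val v = [set x; y] by apply: exists_pair_vertex; rewrite cards2.
have [w wE] : exists w, val w = [set x; z] by apply: exists_pair_vertex; rewrite cards2.
have vw : v != w.
  by apply/eqP => /(congr1 val); rewrite vE wE => /setP/(_ y); rewrite !inE.
move: (G_complete v w vw); rewrite compl_tri_adjE vE wE.
by move/disjointFr/(_ (set21 x y)); rewrite set21.
Qed.

Lemma val_pair_vertex_card2 C : {in val @: C, forall A : {set 'I_n}, #|A| = 2}.
Proof. by move=> _ /imsetP [v _ ->]; apply: card_pair_vertex. Qed.

Lemma clique_compl_triE C : is_clique G C <-> trivIset (val @: C).
Proof.
split=> [C_clique | C_triv v w vC wC vw].
  apply/trivIsetP => _ _ /imsetP [v vC ->] /imsetP [w wC ->] vw.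
  by rewrite -compl_tri_adjE; apply: C_clique => //; apply: contraNneq vw => ->.
rewrite compl_tri_adjE.
by apply: (trivIsetP C_triv); rewrite ?(mem_imset _ _ val_inj) ?(inj_eq val_inj).
Qed.

Lemma card_clique_nbhs C v :
  #|[set w in C | G v w]| = #|[set A in val @: C | [disjoint A & val v]]|.
Proof.
rewrite -(card_imset _ val_inj); apply: eq_card => A; rewrite inE.
apply/imsetP/andP => [[w /setIdP [wC vw] ->] | [/imsetP [w wC ->] wv]].
  by rewrite imset_f // disjoint_sym -compl_tri_adjE.
by exists w; rewrite // inE wC compl_tri_adjE disjoint_sym.
Qed.

Lemma regular_clique_compl_triE C a : regular_clique G C a <->
  [/\ trivIset (val @: C), C != set0 &
      forall B : {set 'I_n}, #|B| = 2 -> B \notin val @: C ->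
        #|[set A in val @: C | [disjoint A & B]]| = a].
Proof.
split=> [[/clique_compl_triE C_triv C_neq0 C_nexus] |
         [/clique_compl_triE C_clique C_neq0 C_nexus]].
  split=> // B cB BC; have [v vB] := exists_pair_vertex cB.
  by rewrite -vB -card_clique_nbhs C_nexus // -(mem_imset _ _ val_inj) vB.
split=> // v vC.
by rewrite card_clique_nbhs C_nexus ?card_pair_vertex ?(mem_imset _ _ val_inj).
Qed.

Lemma regular_clique_compl_tri C a : 4 <= n -> regular_clique G C a ->
  n = 2 * #|C| /\ a + 2 = #|C|.
Proof.
move=> n_ge4 /regular_clique_compl_triE [C_triv C_neq0 C_nexus].
have C_pairs := @val_pair_vertex_card2 C.
have valC_neq0 : val @: C != set0 by rewrite imset_eq0.
have T_ge4 : 4 <= #|'I_n| by rewrite card_ord.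
rewrite -(card_imset C val_inj) -[n in n = _]card_ord.
split; [exact: card_regular_matching C_nexus _ _ | exact: regular_matching_nexus C_nexus _ _].
Qed.

Lemma perfect_matching_regular_clique (P : {set {set 'I_n}}) : 0 < n ->
  partition P [set: 'I_n] -> {in P, forall A : {set 'I_n}, #|A| = 2} ->
  regular_clique G [set v | val v \in P] (#|P| - 2).
Proof.
move=> n_gt0 /and3P [/eqP P_cover P_triv _] P_pairs.
have valC : val @: [set v : pair_vertex n | val v \in P] = P.
  apply/setP => A; apply/imsetP/idP => [[v] | PA]; first by rewrite inE => vP ->.
  by have [v vA] := exists_pair_vertex (P_pairs A PA); exists v; rewrite ?inE vA.
apply/regular_clique_compl_triE; rewrite valC; split=> //.
  have /bigcupP [A PA _] : Ordinal n_gt0 \in cover P by rewrite P_cover inE.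
  by rewrite -(imset_eq0 val) valC; apply/set0Pn; exists A.
by move=> B; apply: nexus_perfect_matching.
Qed.

Lemma compl_tri_Neumaier_even : 3 <= n -> ~~ odd n -> Neumaier G.
Proof.
move=> n_ge3 /even_perfect_matching [P [P_part P_pairs]].
set C := [set v : pair_vertex n | val v \in P].
exists 'C(n, 2), 'C(n - 2, 2), 'C(n - 4, 2), (#|P| - 2), #|C|.
split; [exact: compl_tri_not_complete | exact: compl_tri_edge_regular |].
exists C; split=> //.
by apply: perfect_matching_regular_clique => //; apply: leq_trans n_ge3.
Qed.

End ComplementTriangular.

Theorem lemma4p8 (n : nat) (hn : 5 <= n) :
  (Neumaier (compl_graph (tri_adj n)) <-> ~~ odd n) /\
  (forall k l m a c : nat,
     SR_Neumaier_with (compl_graph (tri_adj n)) 'C(n, 2) k l m a c ->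
     n = 2 * a + 4 /\ c = a + 2).
Proof.
have n_ge4 : 4 <= n by apply: ltnW.
split; first split.
- move=> [_ [_ [_ [a [_ [_ _ [C [C_regular _]]]]]]]].
  by have [n_C _] := regular_clique_compl_tri n_ge4 C_regular; rewrite {1}n_C mul2n odd_double.
- exact: compl_tri_Neumaier_even (ltnW n_ge4).
move=> k l m a c [_ [_ _ [C [C_regular <-]]]].
have [n_C a_C] := regular_clique_compl_tri n_ge4 C_regular.
by split; [rewrite n_C -a_C; lia | exact: esym a_C].
Qed.
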